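(* Let $X$ be a compact antipodal metric space. Then $\mathrm{rad}(\mathbf{E}(X))=\frac{\mathrm{diam}(X)}{2}$, and the constant function $f_0\equiv\frac{\mathrm{diam}(X)}{2}$ is the unique center of $\mathbf{E}(X)$.
   Context: A metric space $X$ is antipodal if for every $x\in X$ there exists $\bar x\in X$ with $d_X(x,\bar x)=d_X(x,y)+d_X(y,\bar x)$ for all $y\in X$. For a metric space $X$, $\Delta(X)=\{f:X\to\mathbb{R}\text{ bounded}:f(x)+f(x')\ge d_X(x,x')\}$ and the tight span $\mathbf{E}(X)$ is the set of pointwise-minimal elements of $\Delta(X)$ with the sup-norm metric. For a bounded metric space $Y$, $\mathrm{rad}(Y)=\inf_{x\in Y}\sup_{y\in Y}d_Y(x,y)$, and $x_0\in Y$ is a center if $\sup_{y\in Y}d_Y(x_0,y)=\mathrm{rad}(Y)$. *)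

From mathcomp Require Import all_boot all_order all_algebra.
From mathcomp Require Import all_classical all_reals.
Set Implicit Arguments. Unset Strict Implicit. Unset Printing Implicit Defensive.
Import Order.TTheory GRing.Theory Num.Theory.
Local Open Scope classical_set_scope.
Local Open Scope ring_scope.

Section Defs.
Variable R : realType.

Definition is_metric (T : Type) (d : T -> T -> R) : Prop :=
  (forall x y, 0 <= d x y) /\
  (forall x y, d x y = 0 <-> x = y) /\
  (forall x y, d x y = d y x) /\
  (forall x y z, d x z <= d x y + d y z).

Definition metric_open (T : Type) (d : T -> T -> R) (U : set T) : Prop :=
  forall x, U x -> exists r : R, 0 < r /\ forall y, d x y < r -> U y.

Definition metric_compact (T : Type) (d : T -> T -> R) : Prop :=
  forall (I : Type) (U : I -> set T),
    (forall i, metric_open d (U i)) -> (forall x, exists i, U i x) ->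
    exists F : set I, finite_set F /\ forall x, exists i, F i /\ U i x.

Definition antipodal (T : Type) (d : T -> T -> R) : Prop :=
  forall x, exists xbar, forall y, d x xbar = d x y + d y xbar.

Definition bounded_fun (T : Type) (f : T -> R) : Prop :=
  exists M : R, forall x, `|f x| <= M.

Definition Delta (T : Type) (d : T -> T -> R) : set (T -> R) :=
  [set f | bounded_fun f /\ forall x x', d x x' <= f x + f x'].

Definition tight_span (T : Type) (d : T -> T -> R) : set (T -> R) :=
  [set f | Delta d f /\
     forall g, Delta d g -> (forall x, g x <= f x) -> g = f].

Definition sup_dist (T : Type) (f g : T -> R) : R :=
  sup [set `|f x - g x| | x in [set: T]].

Definition diameter (T : Type) (d : T -> T -> R) : R :=
  sup [set d p.1 p.2 | p in [set: T * T]].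

Definition ecc (U : Type) (dist : U -> U -> R) (Y : set U) (x : U) : R :=
  sup [set dist x y | y in Y].

Definition radius (U : Type) (dist : U -> U -> R) (Y : set U) : R :=
  inf [set ecc dist Y x | x in Y].

Definition is_center (U : Type) (dist : U -> U -> R) (Y : set U) (x0 : U) : Prop :=
  Y x0 /\ ecc dist Y x0 = radius dist Y.

End Defs.

(* In an antipodal space every point x is at the same distance D from its
   antipode, every distance is at most D, so D = diam X.  Truncating at D
   keeps a function in Delta(X), hence every f in E(X) takes values in
   [0, D] and lies within D/2 of the constant D/2, which is itself in E(X)
   because f(x) + f(xbar) >= D forces any smaller f to be D/2.  Comparing f
   with the Kuratowski functions d(z, .) and d(zbar, .) gives
   ecc f >= max (f z, D - f z) >= D/2, strictly unless f z = D/2 for all z. *)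
From mathcomp Require Import all_boot all_order all_algebra.
From mathcomp Require Import all_classical all_reals.
From mathcomp Require Import lra.
Set Implicit Arguments. Unset Strict Implicit.
Import Order.TTheory GRing.Theory Num.Theory.
Local Open Scope classical_set_scope.
Local Open Scope ring_scope.

Lemma sup_ge0 (R : realType) (E : set R) : (forall x, E x -> 0 <= x) -> 0 <= sup E.
Proof.
move=> E_ge0; have [[[x Ex] ubE]|noSup] := pselect (has_sup E).
  exact: le_trans (E_ge0 _ Ex) (ub_le_sup ubE Ex).
by rewrite sup_out.
Qed.

Section SupImage.
Variables (R : realType) (A : Type) (F : A -> R) (S : set A).

Lemma le_sup_image b a : (forall a, S a -> F a <= b) -> S a -> F a <= sup (F @` S).
Proof.
move=> Fb Sa; apply: ub_le_sup; last by exists a.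
by exists b => _ [a' Sa' <-]; exact: Fb.
Qed.

Lemma sup_image_le b : 0 <= b -> (forall a, S a -> F a <= b) -> sup (F @` S) <= b.
Proof.
move=> b_ge0 Fb; have [S0|/set0P S_neq0] := eqVneq S set0.
  by rewrite S0 image_set0 sup0.
by apply: ge_sup; [exact: image_nonempty | move=> _ [a Sa <-]; exact: Fb].
Qed.

End SupImage.

Lemma le_sup_dist (R : realType) (T : Type) (f g : T -> R) z :
  bounded_fun f -> bounded_fun g -> `|f z - g z| <= sup_dist f g.
Proof.
move=> [Mf bf] [Mg bg].
apply: (@le_sup_image _ _ (fun x => `|f x - g x|) _ (Mf + Mg)) => // y _.
exact: le_trans (ler_normB _ _) (lerD (bf y) (bg y)).
Qed.

Lemma radius_unique_center (R : realType) (U : Type) (dist : U -> U -> R)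
    (Y : set U) (c : U) (r : R) :
  Y c -> ecc dist Y c = r -> (forall y, Y y -> y <> c -> r < ecc dist Y y) ->
  radius dist Y = r /\ (forall y, is_center dist Y y <-> y = c).
Proof.
move=> Yc ecc_c ecc_gt.
have ecc_ge y : Y y -> r <= ecc dist Y y.
  move=> Yy; have [->|yc] := pselect (y = c); first by rewrite ecc_c.
  exact/ltW/ecc_gt.
have rad : radius dist Y = r.
  apply/le_anti/andP; split.
    rewrite -ecc_c; apply: ge_inf; last by exists c.
    by exists r => _ [y Yy <-]; exact: ecc_ge.
  apply: lb_le_inf; first by exists (ecc dist Y c), c.
  by move=> _ [y Yy <-]; exact: ecc_ge.
split=> // y; split=> [[Yy]|->]; last by rewrite /is_center rad.
rewrite rad => ecc_y; apply: contrapT => yc.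
by have := ecc_gt y Yy yc; rewrite ecc_y ltxx.
Qed.

Definition antipode (R : realType) (T : Type) (d : T -> T -> R) (x xb : T) :=
  forall y, d x xb = d x y + d y xb.

Section Metric.
Variables (R : realType) (T : Type) (d : T -> T -> R).
Hypothesis dm : is_metric d.

Lemma metric_ge0 x y : 0 <= d x y.
Proof. by case: dm. Qed.

Lemma metric_xx x : d x x = 0.
Proof. by case: dm => _ [/(_ x x) [_ ->]]. Qed.

Lemma metric_sym x y : d x y = d y x.
Proof. by case: dm => _ [_ []]. Qed.

Lemma metric_triangle x y z : d x z <= d x y + d y z.
Proof. by case: dm => _ [_ [_]]. Qed.

Lemma antipode_dist_eq x xb y yb :
  antipode d x xb -> antipode d y yb -> d x xb = d y yb.
Proof.
move=> hx hy; have := hx y; have := hx yb; have := hy x; have := hy xb.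
rewrite (metric_sym y x) (metric_sym xb yb); lra.
Qed.

Lemma Delta_ge0 f x : Delta d f -> 0 <= f x.
Proof. by case=> _ /(_ x x); rewrite metric_xx; lra. Qed.

Lemma tight_span_le D f x :
  (forall y z, d y z <= D) -> tight_span d f -> f x <= D.
Proof.
move=> dD [Df f_min]; pose g y := Num.min (f y) D.
have D_ge0 : 0 <= D by rewrite -(metric_xx x).
have Dg : Delta d g.
  split.
    exists D => y; have := Delta_ge0 y Df; rewrite /g minEle.
    by case: (leP (f y) D) => ? ?; rewrite ger0_norm; lra.
  move=> y z; have := Df.2 y z; have := dD y z.
  have := Delta_ge0 y Df; have := Delta_ge0 z Df.
  by rewrite /g !minEle; case: (leP (f y) D); case: (leP (f z) D); lra.
have <- : g = f by apply: f_min Dg _ => y; rewrite /g ge_min lexx.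
by rewrite /g ge_min lexx orbT.
Qed.

Lemma dist_tight_span x : bounded_fun (d x) -> tight_span d (d x).
Proof.
move=> bdx; split.
  by split=> // y z; rewrite (metric_sym x y); apply: metric_triangle.
move=> g Dg g_le; apply: funext => y.
have gx0 : g x = 0.
  by apply/le_anti; rewrite -{1}(metric_xx x) g_le Delta_ge0.
by apply/le_anti; rewrite g_le /=; have := Dg.2 x y; rewrite gx0 add0r.
Qed.

Lemma diameter_ge0 : 0 <= diameter d.
Proof. by apply: sup_ge0 => _ [p _ <-]; exact: metric_ge0. Qed.

Section Antipodal.
Hypothesis dA : antipodal d.

Lemma dist_le_antipode x xb y z : antipode d x xb -> d y z <= d x xb.
Proof.
move=> hx; have [yb hy] := dA y.
by rewrite (antipode_dist_eq hx hy) (hy z) lerDl metric_ge0.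
Qed.

Lemma antipode_diameter x xb : antipode d x xb -> diameter d = d x xb.
Proof.
move=> hx; apply/le_anti/andP; split.
  apply: sup_image_le => [|[y z] _]; first exact: metric_ge0.
  exact: dist_le_antipode.
apply: (@le_sup_image _ _ _ _ (d x xb) (x, xb)) => // -[y z] _.
exact: dist_le_antipode.
Qed.

Lemma dist_le_diameter y z : d y z <= diameter d.
Proof. by have [yb hy] := dA y; rewrite (antipode_diameter hy) dist_le_antipode. Qed.

Lemma tight_span_le_diameter f x : tight_span d f -> f x <= diameter d.
Proof. exact/tight_span_le/dist_le_diameter. Qed.

Lemma half_diameter_tight_span : tight_span d (fun _ => diameter d / 2).
Proof.
split.
  split; first by exists `|diameter d / 2|.
  by move=> x y; have := dist_le_diameter x y; lra.
move=> g [_ g_tri] g_le; apply: funext => x; have [xb hx] := dA x.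
have := g_tri x xb; rewrite -(antipode_diameter hx).
by have := g_le x; have := g_le xb; lra.
Qed.

Lemma sup_dist_tight_span_le f g :
  tight_span d f -> tight_span d g -> sup_dist f g <= diameter d.
Proof.
move=> Ef Eg; apply: sup_image_le => [|z _]; first exact: diameter_ge0.
have := Delta_ge0 z Ef.1; have := tight_span_le_diameter z Ef.
have := Delta_ge0 z Eg.1; have := tight_span_le_diameter z Eg.
by move=> gz_le gz_ge0 fz_le fz_ge0; rewrite ler_norml; apply/andP; split; lra.
Qed.

Lemma le_ecc_dist f y z :
  tight_span d f -> `|f z - d y z| <= ecc (@sup_dist R T) (tight_span d) f.
Proof.
move=> Ef; have Edy : tight_span d (d y).
  apply: dist_tight_span; exists (diameter d) => w.
  by rewrite ger0_norm ?metric_ge0 ?dist_le_diameter.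
apply: le_trans (le_sup_dist z Ef.1.1 Edy.1.1) _.
apply: (@le_sup_image _ _ _ _ (diameter d)) Edy => g Eg.
exact: sup_dist_tight_span_le.
Qed.

Lemma tight_span_le_ecc f z :
  tight_span d f -> f z <= ecc (@sup_dist R T) (tight_span d) f.
Proof.
move=> Ef; have := le_ecc_dist z z Ef; rewrite metric_xx subr0.
exact: le_trans (ler_norm _).
Qed.

Lemma diameter_sub_le_ecc f z :
  tight_span d f -> diameter d - f z <= ecc (@sup_dist R T) (tight_span d) f.
Proof.
move=> Ef; have [zb hz] := dA z; have := le_ecc_dist zb z Ef.
rewrite (metric_sym zb z) -(antipode_diameter hz) -normrN opprB.
exact: le_trans (ler_norm _).
Qed.

Lemma half_diameter_le_ecc f :
  tight_span d f -> diameter d / 2 <= ecc (@sup_dist R T) (tight_span d) f.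
Proof.
move=> Ef; have [[z]|noT] := pselect (inhabited T).
  by have := tight_span_le_ecc z Ef; have := diameter_sub_le_ecc z Ef; lra.
(* For empty [T] every supremum involved is [sup set0 = 0]. *)
have diam_le0 : diameter d <= 0.
  by apply: sup_image_le => // -[y z] _; have := noT (inhabits y).
have ecc_ge0 : 0 <= ecc (@sup_dist R T) (tight_span d) f.
  by apply: sup_ge0 => _ [g _ <-]; apply: sup_ge0 => _ [z _ <-].
lra.
Qed.

Lemma half_diameter_lt_ecc f :
  tight_span d f -> f <> (fun _ => diameter d / 2) ->
  diameter d / 2 < ecc (@sup_dist R T) (tight_span d) f.
Proof.
move=> Ef f_neq; have [z fz] : exists z, f z <> diameter d / 2.
  by apply/existsNP => f_eq; apply/f_neq/funext.
have := tight_span_le_ecc z Ef; have := diameter_sub_le_ecc z Ef.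
by case: (ltgtP (f z) (diameter d / 2)) fz => // ? _; lra.
Qed.

Lemma ecc_half_diameter :
  ecc (@sup_dist R T) (tight_span d) (fun _ => diameter d / 2) = diameter d / 2.
Proof.
have half_ge0 : 0 <= diameter d / 2 by have := diameter_ge0; lra.
apply/le_anti/andP; split; last exact/half_diameter_le_ecc/half_diameter_tight_span.
apply: sup_image_le => // g Eg; apply: sup_image_le => // z _.
have := Delta_ge0 z Eg.1; have := tight_span_le_diameter z Eg.
by move=> gz_le gz_ge0; rewrite ler_norml; apply/andP; split; lra.
Qed.

End Antipodal.
End Metric.

Theorem proposition2p25 (R : realType) (T : Type) (d : T -> T -> R) :
  is_metric d -> metric_compact d -> antipodal d ->
  radius (@sup_dist R T) (tight_span d) = diameter d / 2 /\
  (forall f : T -> R,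
     is_center (@sup_dist R T) (tight_span d) f <-> f = (fun _ => diameter d / 2)).
Proof.
move=> dm _ dA; apply: radius_unique_center.
- exact: half_diameter_tight_span.
- exact: ecc_half_diameter.
- exact: half_diameter_lt_ecc.
Qed.
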